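(* Let $\mathbb{H}$ be a reproducing kernel Hilbert space with inner product $\langle\cdot,\cdot\rangle$ and feature map $\phi$, and let $(X,A,Y)$ be jointly distributed with $Y=\langle\phi(X),y\rangle$ and $A=\langle\phi(X),a\rangle$ for some nonzero $y,a\in\mathbb{H}$, with $\operatorname{Var}(Y),\operatorname{Var}(A)>0$; let $\rho_{YA}$ be the correlation coefficient of $Y$ and $A$. For $\lambda\ge 0$ define $$\mathbf{OPT}(\lambda):=\inf_{Z}\ \lambda\operatorname{Var}\mathbb{E}[A\mid Z]-\operatorname{Var}\mathbb{E}[Y\mid Z],$$ the infimum over all (possibly randomized) representations $Z=g(X)$. Then $$\mathbf{OPT}(\lambda)\ge\frac12\Big\{\lambda\operatorname{Var}(A)-\operatorname{Var}(Y)-\sqrt{\operatorname{Var}^2(Y)+\lambda^2\operatorname{Var}^2(A)-2\lambda\operatorname{Var}(A)\operatorname{Var}(Y)(2\rho_{YA}^2-1)}\Big\}.$$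
   Context: A (possibly randomized) representation is $Z=g(X,S)$ for a measurable $g$ and auxiliary randomness $S$ independent of $(X,A,Y)$. $\phi(X)$ is assumed to have finite second moment in $\mathbb{H}$. *)

From HB Require Import structures.
From mathcomp Require Import all_boot all_order all_algebra.
From mathcomp Require Import all_classical all_reals all_analysis.
Set Implicit Arguments. Unset Strict Implicit. Unset Printing Implicit Defensive.
Import Order.TTheory GRing.Theory Num.Theory.
Local Open Scope classical_set_scope.
Local Open Scope ring_scope.

Definition inner_product (R : realType) (V : lmodType R) (ip : V -> V -> R) :=
  [/\ (forall u v, ip u v = ip v u),
      (forall (c : R) u v w, ip (c *: u + v) w = c * ip u w + ip v w),
      (forall u, 0 <= ip u u) &
      (forall u, ip u u = 0 -> u = 0)].

(* completeness of V for the norm ||u|| = sqrt (ip u u)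
   (stated with squared norms: ||.||^2 < e for all e > 0) *)
Definition ip_complete (R : realType) (V : lmodType R) (ip : V -> V -> R) :=
  forall u : nat -> V,
    (forall e : R, 0 < e -> exists N : nat, forall m n : nat,
        (N <= m)%N -> (N <= n)%N -> ip (u m - u n) (u m - u n) < e) ->
    exists v : V, forall e : R, 0 < e -> exists N : nat, forall n : nat,
        (N <= n)%N -> ip (u n - v) (u n - v) < e.

(* (V, ip) is a reproducing kernel Hilbert space on the set Xs with feature map
   phi: V is a Hilbert space, and f in V is identified with the function
   x |-> ip f (phi x) (reproducing property); this identification is injective,
   so V is a Hilbert space of functions on Xs with kernel
   k(x, x') = ip (phi x) (phi x'). *)
Definition is_RKHS (R : realType) (V : lmodType R) (Xs : Type)
    (ip : V -> V -> R) (phi : Xs -> V) :=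
  [/\ inner_product ip, ip_complete ip &
      (forall f : V, (forall x, ip f (phi x) = 0) -> f = 0)].

Definition indep_rv d (Om : measurableType d) (R : realType)
    (P : probability Om R) d1 (T1 : measurableType d1)
    d2 (T2 : measurableType d2) (U : Om -> T1) (W : Om -> T2) :=
  forall (B : set T1) (C : set T2), measurable B -> measurable C ->
    P (U @^-1` B `&` W @^-1` C) = (P (U @^-1` B) * P (W @^-1` C))%E.

(* W is (a version of) the conditional expectation E[f | Z]:
   W is sigma(Z)-measurable, integrable, and has the same integral as f
   on every event of sigma(Z) = { Z^-1 C | C measurable }. *)
Definition is_cond_exp d (Om : measurableType d) (R : realType)
    (P : probability Om R) dZ (TZ : measurableType dZ)
    (Z : Om -> TZ) (f W : Om -> R) :=
  [/\ (forall B : set R, measurable B ->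
         exists C : set TZ, measurable C /\ W @^-1` B = Z @^-1` C),
      P.-integrable setT (EFin \o W) &
      (forall C : set TZ, measurable C ->
         (\int[P]_(w in Z @^-1` C) (W w)%:E
          = \int[P]_(w in Z @^-1` C) (f w)%:E)%E)].

(* Conditioning on Z shrinks the quadratic form of covariances: for all t, s,
   Var(t E[A|Z] + s E[Y|Z]) <= Var(t A + s Y), because conditional expectation
   preserves means and is an L2 contraction.  Hence the covariance matrix K of
   (E[A|Z], E[Y|Z]) satisfies 0 <= K <= S, with S the covariance matrix of
   (A, Y), and an elementary 2x2 computation bounds lam K11 - K22 from below by
   (lam S11 - S22 - sqrt ((lam S11 - S22)^2 + 4 lam det S)) / 2, which is the
   stated bound written with rho_YA.  The contraction is proved by testing
   E[F|Z] = V against simple sigma(Z)-measurable approximations s_n of V with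
   s_n^2 <= V s_n, then passing to the limit with Fatou's lemma. *)

From HB Require Import structures.
From mathcomp Require Import all_boot all_order all_algebra.
From mathcomp Require Import all_classical all_reals all_analysis.
From mathcomp Require Import measurable_realfun ring lra.
Set Implicit Arguments. Unset Strict Implicit. Unset Printing Implicit Defensive.
Import Order.TTheory GRing.Theory Num.Theory.
Local Open Scope classical_set_scope.
Local Open Scope ring_scope.
Import HBSimple HBNNSimple numFieldNormedType.Exports.

Section psd2.
Variable R : realDomainType.

(* [[a, b], [b, c]] is positive semidefinite. *)
Definition psd2 (a b c : R) := [/\ 0 <= a, 0 <= c & b ^+ 2 <= a * c].

Lemma quadratic_form2_ge0_psd2 (a b c : R) :
  (forall t s : R, 0 <= a * t ^+ 2 + 2 * b * t * s + c * s ^+ 2) -> psd2 a b c.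
Proof.
move=> q_ge0.
have a_ge0 : 0 <= a by have := q_ge0 1 0; lra.
have c_ge0 : 0 <= c by have := q_ge0 0 1; lra.
split=> //.
have qa : 0 <= a * (a * c - b ^+ 2).
  by have := q_ge0 b (- a); congr (_ <= _); ring.
have qc : 0 <= c * (a * c - b ^+ 2).
  by have := q_ge0 (- c) b; congr (_ <= _); ring.
have [a0|a_gt0] := eqVneq a 0; last first.
  by move: qa; rewrite pmulr_rge0 ?subr_ge0 // lt_def a_gt0.
have [c0|c_gt0] := eqVneq c 0; last first.
  by move: qc; rewrite pmulr_rge0 ?subr_ge0 // lt_def c_gt0.
have := q_ge0 1 (- b); rewrite a0 c0; nra.
Qed.

Lemma psd2_cross_le (a b c a' b' c' : R) :
  psd2 a b c -> psd2 a' b' c' -> 2 * b * b' <= a * a' + c * c'.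
Proof.
case=> a0 c0 bac [a'0 c'0 bac'].
have p0 : 0 <= a * a' by exact: mulr_ge0.
have q0 : 0 <= c * c' by exact: mulr_ge0.
have : (b * b') ^+ 2 <= (a * a') * (c * c').
  by have := ler_pM (sqr_ge0 b) (sqr_ge0 b') bac bac'; congr (_ <= _); ring.
have : 0 <= a * a' + c * c' by lra.
have := sqr_ge0 (a * a' - c * c'); nra.
Qed.

End psd2.

Lemma psd2_sandwich_lower_bound (R : rcfType)
    (lam k11 k12 k22 s11 s12 s22 : R) :
  0 <= lam -> psd2 k11 k12 k22 -> psd2 (s11 - k11) (s12 - k12) (s22 - k22) ->
  2^-1 * (lam * s11 - s22
          - Num.sqrt ((lam * s11 - s22) ^+ 2
                      + 4 * lam * (s11 * s22 - s12 ^+ 2)))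
  <= lam * k11 - k22.
Proof.
move=> lam0 psdK psdL.
set l11 := s11 - k11; set l12 := s12 - k12; set l22 := s22 - k22.
have psdL' : psd2 (lam ^+ 2 * l11) (lam * l12) l22.
  case: psdL => l11_ge0 l22_ge0 detL; split => //.
    by rewrite mulr_ge0 ?sqr_ge0.
  by rewrite exprMn -[_ * l11 * l22]mulrA ler_wpM2l ?sqr_ge0.
have cross := psd2_cross_le psdK psdL'.
have [_ _ detK] := psdK; have [_ _ detL] := psdL.
set D := (X in Num.sqrt X).
(* The cross term of [D - (lam (l11 - k11) + (k22 - l22))^2] is controlled by
   [psd2_cross_le] for K and diag(lam, 1) L diag(lam, 1). *)
have gap : (lam * (l11 - k11) + (k22 - l22)) ^+ 2 <= D.
  have -> : D = (lam * (l11 - k11) + (k22 - l22)) ^+ 2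
     + 4 * (k11 * (lam ^+ 2 * l11) + k22 * l22 - 2 * k12 * (lam * l12)
            + lam * (k11 * k22 - k12 ^+ 2) + lam * (l11 * l22 - l12 ^+ 2)).
    by rewrite /D /l11 /l12 /l22; ring.
  rewrite lerDl; apply: mulr_ge0 => //.
  have : 0 <= lam * (k11 * k22 - k12 ^+ 2) by rewrite mulr_ge0 ?subr_ge0.
  have : 0 <= lam * (l11 * l22 - l12 ^+ 2) by rewrite mulr_ge0 ?subr_ge0.
  lra.
have : lam * (l11 - k11) + (k22 - l22) <= Num.sqrt D.
  by rewrite (le_trans (ler_norm _)) // -sqrtr_sqr; exact: ler_wsqrtr.
rewrite /l11 /l22; lra.
Qed.

Lemma corr_discriminantE (R : rcfType) (lam vA vY c : R) : 0 < vA -> 0 < vY ->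
  vY ^+ 2 + lam ^+ 2 * vA ^+ 2
    - 2 * lam * vA * vY * (2 * (c / Num.sqrt (vY * vA)) ^+ 2 - 1)
  = (lam * vA - vY) ^+ 2 + 4 * lam * (vA * vY - c ^+ 2).
Proof.
move=> vA_gt0 vY_gt0.
rewrite expr_div_n sqr_sqrtr ?mulr_ge0 ?ltW //; field.
by rewrite !gt_eqF.
Qed.

Section inner_product.
Variables (R : realType) (V : lmodType R) (ip : V -> V -> R).
Hypothesis ipP : inner_product ip.

Lemma ipDl u v w : ip (u + v) w = ip u w + ip v w.
Proof.
by case: ipP => _ ipl _ _; have := ipl 1 u v w; rewrite scale1r mul1r.
Qed.

Lemma ipZl c u w : ip (c *: u) w = c * ip u w.
Proof.
have ip0l : ip 0 w = 0 by have := ipDl 0 0 w; rewrite addr0; lra.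
by case: ipP => _ ipl _ _; rewrite -[c *: u]addr0 ipl ip0l addr0.
Qed.

Lemma ip_Cauchy_Schwarz u v : ip u v ^+ 2 <= ip u u * ip v v.
Proof.
case: ipP => ipC _ ip_ge0 _.
suff [] : psd2 (ip u u) (ip u v) (ip v v) by [].
apply: quadratic_form2_ge0_psd2 => t s.
have := ip_ge0 (t *: u + s *: v).
rewrite !ipDl !ipZl ![ip _ (_ + _)]ipC !ipDl !ipZl (ipC v u); lra.
Qed.

End inner_product.

Section square_integrable.
Context d (T : measurableType d) (R : realType).

Lemma integrable_sqr_Lfun2 (mu : {measure set T -> \bar R}) (f : T -> R) :
  measurable_fun setT f -> (\int[mu]_x (f x ^+ 2)%:E < +oo)%E ->
  f \in Lfun mu 2%:E.
Proof.
move=> mf f2_fin; rewrite inE; apply/andP; split; first by rewrite inE.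
rewrite inE /= /finite_norm unlock /Lnorm; apply: poweR_lty.
rewrite (eq_integral (fun x => (f x ^+ 2)%:E)) // => x _.
by rewrite abse_EFin poweR_EFin powR_mulrn ?normr_ge0 // real_normK ?num_real.
Qed.

Lemma ip_feature_Lfun2 (mu : {measure set T -> \bar R}) (V : lmodType R)
    (ip : V -> V -> R) dX (Xs : measurableType dX) (phi : Xs -> V)
    (X : T -> Xs) (h : V) :
  inner_product ip -> measurable_fun setT (fun x => ip (phi x) h) ->
  measurable_fun setT (fun x => ip (phi x) (phi x)) -> measurable_fun setT X ->
  (\int[mu]_w (ip (phi (X w)) (phi (X w)))%:E < +oo)%E ->
  (fun w => ip (phi (X w)) h) \in Lfun mu 2%:E.
Proof.
move=> ipP mh mphi mX phi_fin.
have ip_ge0 u : 0 <= ip u u by case: ipP.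
have mhX := measurableT_comp mh mX.
have mphiX := measurableT_comp mphi mX.
apply: integrable_sqr_Lfun2 => //.
apply: (@le_lt_trans _ _
  (\int[mu]_w ((ip h h)%:E * (ip (phi (X w)) (phi (X w)))%:E))%E).
  apply: ge0_le_integral => //.
  - by move=> w _; rewrite lee_fin sqr_ge0.
  - by apply/measurable_EFinP; exact: measurable_funX.
  - by apply: emeasurable_funM => //; exact/measurable_EFinP.
  - by move=> w _; rewrite -EFinM lee_fin mulrC ip_Cauchy_Schwarz.
rewrite ge0_integralZl ?lte_mul_pinfty ?lee_fin //.
- exact/measurable_EFinP.
- by move=> w _; rewrite lee_fin.
Qed.

End square_integrable.

Section L2_probability.
Context d (T : measurableType d) (R : realType) (P : probability T R).

Let Pfin : P setT \is a fin_num := fin_num_measure P _ measurableT.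

Lemma Lfun2_integrable (U : T -> R) :
  U \in Lfun P 2%:E -> P.-integrable setT (EFin \o U).
Proof. by move=> U_2; exact/Lfun1_integrable/(Lfun_subset12 Pfin). Qed.

Lemma Lfun2_lincomb (U1 U2 : T -> R) (t s : R) :
  U1 \in Lfun P 2%:E -> U2 \in Lfun P 2%:E ->
  t \o* U1 \+ s \o* U2 \in Lfun P 2%:E.
Proof.
have le12 : 1 <= 2 :> R by lra.
by move=> U1_2 U2_2; rewrite -fctD rpredD ?Lfun_scale.
Qed.

Lemma fine_variance_lincomb (U1 U2 : T -> R) (t s : R) :
  U1 \in Lfun P 2%:E -> U2 \in Lfun P 2%:E ->
  'V_P[t \o* U1 \+ s \o* U2] = (fine 'V_P[U1] * t ^+ 2
    + 2 * fine (covariance P U1 U2) * t * s + fine 'V_P[U2] * s ^+ 2)%:E.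
Proof.
move=> U1_2 U2_2.
have le12 : 1 <= 2 :> R by lra.
have [U1_1 U2_1] := (Lfun_subset12 Pfin U1_2, Lfun_subset12 Pfin U2_2).
have U12_1 := Lfun2_mul_Lfun1 U1_2 U2_2.
have sU2_2 := Lfun_scale s le12 U2_2.
have U1sU2_1 := Lfun2_mul_Lfun1 U1_2 sU2_2.
have sU2_1 := Lfun_subset12 Pfin sU2_2.
rewrite varianceD ?Lfun_scale // !varianceZ // covarianceZl //.
rewrite covarianceZr // -[covariance P U1 U2]fineK ?covariance_fin_num //.
rewrite -[ 'V_P[U1]]fineK ?variance_fin_num //.
rewrite -[ 'V_P[U2]]fineK ?variance_fin_num //.
by rewrite -!EFinM -!EFinD /=; congr EFin; ring.
Qed.

Lemma psd2_covariance (U1 U2 : T -> R) :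
  U1 \in Lfun P 2%:E -> U2 \in Lfun P 2%:E ->
  psd2 (fine 'V_P[U1]) (fine (covariance P U1 U2)) (fine 'V_P[U2]).
Proof.
move=> U1_2 U2_2; apply: quadratic_form2_ge0_psd2 => t s.
by rewrite -lee_fin -fine_variance_lincomb // variance_ge0.
Qed.

Lemma psd2_covariance_sub (U1 U2 W1 W2 : T -> R) :
  U1 \in Lfun P 2%:E -> U2 \in Lfun P 2%:E ->
  W1 \in Lfun P 2%:E -> W2 \in Lfun P 2%:E ->
  (forall t s : R,
    'V_P[(t \o* U1 \+ s \o* U2)%R] <= 'V_P[(t \o* W1 \+ s \o* W2)%R])%E ->
  psd2 (fine 'V_P[W1] - fine 'V_P[U1])
       (fine (covariance P W1 W2) - fine (covariance P U1 U2))
       (fine 'V_P[W2] - fine 'V_P[U2]).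
Proof.
move=> U1_2 U2_2 W1_2 W2_2 le_var; apply: quadratic_form2_ge0_psd2 => t s.
have := le_var t s; rewrite !fine_variance_lincomb // lee_fin -subr_ge0.
by congr (_ <= _); ring.
Qed.

End L2_probability.

Section integral_mul_fimfun.
Context d (T : measurableType d) (R : realType).
Variable mu : {measure set T -> \bar R}.

Lemma integrable_mul_bounded (h f : T -> R) :
  mu.-integrable setT (EFin \o h) -> measurable_fun setT f ->
  [bounded f x | x in setT] -> mu.-integrable setT (fun x => (h x * f x)%:E).
Proof.
move=> hi mf bf; have := integrableMl measurableT hi mf bf.
by apply: eq_integrable => // x _; rewrite /= EFinM.
Qed.

Lemma mul_indicE (h : T -> R) (A : set T) :
  (fun x => (h x * \1_A x)%:E) = (EFin \o h) \_ A.
Proof.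
apply/funext => x; rewrite patchE indicE.
by case: (boolP (x \in A)) => _ /=; rewrite ?mulr1 ?mulr0.
Qed.

Lemma integral_mul_fimfun (h : T -> R) (f : {fimfun T >-> R}) :
  (forall y, measurable (f @^-1` [set y])) -> mu.-integrable setT (EFin \o h) ->
  (\int[mu]_x (h x * f x)%:E = \sum_(y \in range f)
      y%:E * \int[mu]_(x in f @^-1` [set y]) (h x)%:E)%E.
Proof.
move=> mf hi.
have hAi y : mu.-integrable setT (fun x => (h x * \1_(f @^-1` [set y]) x)%:E).
  rewrite mul_indicE -integrable_mkcond //.
  exact: integrableS hi.
under eq_integral => x _.
  rewrite (fimfunE f x) fsbig_finite //= big_distrr /= -sumEFin.
  under eq_bigr => y _ do rewrite mulrCA EFinM.
  over.
rewrite integral_sum //; last by move=> y; exact: integrableZl.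
rewrite fsbig_finite //; apply: eq_bigr => y _.
by rewrite integralZl // mul_indicE -integral_mkcond.
Qed.

End integral_mul_fimfun.

Section integral_lincomb.
Context d (T : measurableType d) (R : realType).
Variable mu : {measure set T -> \bar R}.
Variables (D : set T) (mD : measurable D) (f1 f2 : T -> R) (t s : R).
Hypothesis if1 : mu.-integrable D (EFin \o f1).
Hypothesis if2 : mu.-integrable D (EFin \o f2).

Let lincombE x :
  ((t \o* f1 \+ s \o* f2) x)%:E
  = (t%:E * (EFin \o f1) x + s%:E * (EFin \o f2) x)%E.
Proof. by rewrite /= EFinD !EFinM muleC [(s%:E * _)%E]muleC. Qed.

Lemma integrable_lincomb : mu.-integrable D (EFin \o (t \o* f1 \+ s \o* f2)).
Proof.
have := integrableD mD (integrableZl mD t if1) (integrableZl mD s if2).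
by apply: eq_integrable => // x _; rewrite /= lincombE.
Qed.

Lemma integral_lincomb :
  (\int[mu]_(x in D) ((t \o* f1 \+ s \o* f2) x)%:E
   = t%:E * \int[mu]_(x in D) (f1 x)%:E + s%:E * \int[mu]_(x in D) (f2 x)%:E)%E.
Proof.
rewrite -(integralZl mD if1) -(integralZl mD if2) -integralD //.
- by apply: eq_integral => x _; rewrite lincombE.
- exact: integrableZl.
- exact: integrableZl.
Qed.

End integral_lincomb.

Section sfun_approx.
Context d (T : measurableType d) (R : realType) (f : T -> R).
Hypothesis mf : measurable_fun setT f.

Let mfpos : measurable_fun setT (EFin \o f^\+).
Proof. exact/measurable_EFinP/measurable_funrpos. Qed.

Let mfneg : measurable_fun setT (EFin \o f^\-).
Proof. exact/measurable_EFinP/measurable_funrneg. Qed.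

Definition sfun_approx n : {sfun T >-> R} :=
  (nnsfun_approx measurableT mfpos n : {sfun T >-> R})
  - (nnsfun_approx measurableT mfneg n : {sfun T >-> R}).

Let sfun_approxE n x : sfun_approx n x =
  nnsfun_approx measurableT mfpos n x - nnsfun_approx measurableT mfneg n x.
Proof. by rewrite sfunB. Qed.

Lemma sfun_approx_sqr_le n x : sfun_approx n x ^+ 2 <= f x * sfun_approx n x.
Proof.
have bounds (g : T -> R) (mg : measurable_fun setT (EFin \o g)) :
    (forall y, 0 <= g y) -> 0 <= nnsfun_approx measurableT mg n x <= g x.
  move=> g_ge0; rewrite fun_ge0 /= nnsfun_approxE -lee_fin.
  by apply: le_approx => // y _; rewrite lee_fin.
have /andP[p_ge0 p_le] := bounds _ mfpos (funrpos_ge0 f).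
have /andP[q_ge0 q_le] := bounds _ mfneg (funrneg_ge0 f).
rewrite sfun_approxE; rewrite /funrpos /funrneg in p_le q_le.
have [f_ge0|f_lt0] := leP 0 (f x).
  have /max_idPr fneg : - f x <= 0 by rewrite oppr_le0.
  by rewrite (max_idPl f_ge0) fneg in p_le q_le; nra.
have /max_idPl fneg : 0 <= - f x by rewrite oppr_ge0 ltW.
by rewrite (max_idPr (ltW f_lt0)) fneg in p_le q_le; nra.
Qed.

Lemma cvg_sfun_approx x : sfun_approx ^~ x @ \oo --> f x.
Proof.
have cvg_part (g : T -> R) (mg : measurable_fun setT (EFin \o g)) :
    (forall y, 0 <= g y) -> nnsfun_approx measurableT mg ^~ x @ \oo --> g x.
  move=> g_ge0; under eq_fun do rewrite nnsfun_approxE.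
  apply: (@cvg_approx _ _ _ setT (EFin \o g) x _ I (ltry _)) => y _.
  by rewrite lee_fin.
have -> : f x = f^\+ x - f^\- x by rewrite -[in LHS](funrposBneg f).
under eq_fun do rewrite sfun_approxE.
by apply: cvgB; apply: cvg_part; [exact: funrpos_ge0|exact: funrneg_ge0].
Qed.

End sfun_approx.

Section conditional_expectation.
Context d (T : measurableType d) (R : realType) (P : probability T R).
Context dZ (TZ : measurableType dZ) (Z : T -> TZ).
Hypothesis mZ : measurable_fun setT Z.
Local Notation G := (g_sigma_algebra_preimageType Z).

Lemma measurable_sigma_preimage (A : set G) :
  measurable A -> measurable (A : set T).
Proof. by case=> B mB <-; exact: mZ. Qed.

Lemma measurable_fun_sigma_preimage (f : G -> R) :
  measurable_fun setT f -> measurable_fun (setT : set T) f.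
Proof. by move=> mf _ B mB; exact/measurable_sigma_preimage/mf. Qed.

Lemma sigma_preimage_measurableP (W : T -> R) :
  (forall B, measurable B ->
     exists C, measurable C /\ W @^-1` B = Z @^-1` C) <->
  measurable_fun (setT : set G) W.
Proof.
split=> [W_Z _ B mB|mW B mB].
  by have [C [mC WBE]] := W_Z B mB; exists C => //; rewrite WBE.
by have [C mC] := mW measurableT B mB; rewrite !setTI => ZCE; exists C.
Qed.

Lemma is_cond_exp_lincomb (F1 F2 V1 V2 : T -> R) (t s : R) :
  P.-integrable setT (EFin \o F1) -> P.-integrable setT (EFin \o F2) ->
  is_cond_exp P Z F1 V1 -> is_cond_exp P Z F2 V2 ->
  is_cond_exp P Z (t \o* F1 \+ s \o* F2) (t \o* V1 \+ s \o* V2).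
Proof.
move=> iF1 iF2 [/sigma_preimage_measurableP mV1 iV1 V1E].
move=> [/sigma_preimage_measurableP mV2 iV2 V2E].
split.
- apply/sigma_preimage_measurableP.
  by apply: measurable_funD; apply: measurable_funM.
- exact: integrable_lincomb.
- move=> C mC; have mZC : measurable (Z @^-1` C).
    by rewrite -[_ @^-1` _]setTI; exact: mZ.
  have restrict U :
      P.-integrable setT (EFin \o U) -> P.-integrable (Z @^-1` C) (EFin \o U).
    exact: integrableS.
  by rewrite !integral_lincomb ?restrict // V1E // V2E.
Qed.

Section contraction.
Variables F V : T -> R.
Hypotheses (FV : is_cond_exp P Z F V) (F_L2 : F \in Lfun P 2%:E).

Let iF : P.-integrable setT (EFin \o F) := Lfun2_integrable F_L2.

Let iV : P.-integrable setT (EFin \o V). Proof. by case: FV. Qed.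

Let mV : measurable_fun (setT : set G) V.
Proof. by case: FV => /sigma_preimage_measurableP. Qed.

Lemma cond_exp_integral_mul_sfun (f : {sfun G >-> R}) :
  (\int[P]_x (V x * f x)%:E = \int[P]_x (F x * f x)%:E)%E.
Proof.
have mf y : measurable ((f : G -> R) @^-1` [set y] : set T).
  exact/measurable_sigma_preimage/measurable_funPTI.
pose fT : {fimfun T >-> R} := (f : {fimfun G >-> R}).
rewrite !(@integral_mul_fimfun _ T _ P _ fT mf) //.
apply: eq_fsbigr => y _; congr (_ * _)%E.
have [C mC] := measurable_funPTI f (measurable_set1 y); rewrite setTI => <-.
by case: FV => _ _; exact.
Qed.

Let s := sfun_approx mV.

Let ms n : measurable_fun setT (s n : T -> R).
Proof. exact/measurable_fun_sigma_preimage/measurable_funPT. Qed.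

(* E[s_n^2] <= E[V s_n] = E[F s_n] <= (E[F^2] + E[s_n^2]) / 2. *)
Lemma integral_sqr_sfun_approx_le n :
  (\int[P]_x (s n x ^+ 2)%:E <= \int[P]_x (F x ^+ 2)%:E)%E.
Proof.
have iVs := integrable_mul_bounded iV (ms n) (simple_bounded (s n)).
have iFs := integrable_mul_bounded iF (ms n) (simple_bounded (s n)).
have iF2 : P.-integrable setT (fun x => (F x ^+ 2)%:E).
  exact: Lfun2_integrable_sqr F_L2.
have is2 : P.-integrable setT (fun x => (s n x ^+ 2)%:E).
  apply: le_integrable iVs => //.
    by apply/measurable_EFinP; exact: measurable_funX.
  move=> x _; rewrite !abse_EFin lee_fin (ger0_norm (sqr_ge0 _)).
  exact: le_trans (sfun_approx_sqr_le mV n x) (ler_norm _).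
have le_mul : (\int[P]_x (s n x ^+ 2)%:E <= \int[P]_x (F x * s n x)%:E)%E.
  rewrite -cond_exp_integral_mul_sfun; apply: le_integral => // x _.
  by rewrite lee_fin sfun_approx_sqr_le.
have amgm : (2%:E * \int[P]_x (F x * s n x)%:E
             <= \int[P]_x (F x ^+ 2)%:E + \int[P]_x (s n x ^+ 2)%:E)%E.
  rewrite -integralZl // -integralD //; apply: le_integral => //.
  - exact: integrableZl.
  - exact: integrableD.
  - move=> x _; rewrite -EFinM -EFinD lee_fin.
    by move: (F x) (s n x) => a b; have := sqr_ge0 (a - b); nra.
move: le_mul amgm.
rewrite -(fineK (integrable_fin_num measurableT is2)).
rewrite -(fineK (integrable_fin_num measurableT iFs)).
rewrite -(fineK (integrable_fin_num measurableT iF2)).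
rewrite -EFinM -EFinD !lee_fin.
by move: (fine _) (fine _) (fine _) => a b c; lra.
Qed.

Lemma integral_sqr_cond_exp_le :
  (\int[P]_x (V x ^+ 2)%:E <= \int[P]_x (F x ^+ 2)%:E)%E.
Proof.
have cvg_sqr (x : T) : (fun n => (s n x ^+ 2)%:E) @ \oo --> (V x ^+ 2)%:E.
  apply: cvg_EFin; first exact: nearW.
  have -> : fine \o (fun n => (s n x ^+ 2)%:E) = (s ^~ x) \* (s ^~ x).
    by apply/funext => n /=; rewrite expr2.
  by rewrite expr2; apply: cvgM; exact: cvg_sfun_approx.
have ms2 n : measurable_fun (setT : set T) (fun x => (s n x ^+ 2)%:E).
  by apply/measurable_EFinP; exact: measurable_funX.
have := fatou P measurableT ms2 (fun n x _ => sqr_ge0 (s n x)).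
under eq_integral => x _ do rewrite (cvg_limn_einf_sup (cvg_sqr x)).1.
move/le_trans; apply; rewrite limn_einf_lim.
apply: lime_le; first exact: is_cvg_einfs.
apply: nearW => n; apply: le_trans (integral_sqr_sfun_approx_le n).
by apply: ereal_inf_lbound; exists n; first exact: leqnn.
Qed.

Lemma cond_exp_Lfun2 : V \in Lfun P 2%:E.
Proof.
apply: integrable_sqr_Lfun2; first exact: measurable_fun_sigma_preimage.
apply: le_lt_trans integral_sqr_cond_exp_le _.
have /integrableP[_ F2_fin] := Lfun2_integrable_sqr F_L2.
apply: le_lt_trans F2_fin.
by under [leRHS]eq_integral => x _ do
  rewrite compE abse_EFin (ger0_norm (sqr_ge0 _)).
Qed.

Lemma variance_cond_exp_le : ('V_P[V] <= 'V_P[F])%E.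
Proof.
rewrite !varianceE ?cond_exp_Lfun2 //.
have -> : ('E_P[V] = 'E_P[F])%E.
  rewrite unlock; case: FV => _ _ /(_ setT measurableT).
  by rewrite preimage_setT.
by apply: leeB => //; rewrite unlock; exact: integral_sqr_cond_exp_le.
Qed.

End contraction.

Lemma variance_cond_exp_lincomb_le (F1 F2 V1 V2 : T -> R) (t s : R) :
  F1 \in Lfun P 2%:E -> F2 \in Lfun P 2%:E ->
  is_cond_exp P Z F1 V1 -> is_cond_exp P Z F2 V2 ->
  ('V_P[(t \o* V1 \+ s \o* V2)%R] <= 'V_P[(t \o* F1 \+ s \o* F2)%R])%E.
Proof.
move=> F1_2 F2_2 FV1 FV2.
apply: variance_cond_exp_le; last exact: Lfun2_lincomb.
exact: is_cond_exp_lincomb (Lfun2_integrable F1_2) (Lfun2_integrable F2_2)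
  FV1 FV2.
Qed.

End conditional_expectation.

Theorem theorem6 (R : realType) (dO : measure_display) (Om : measurableType dO)
  (P : probability Om R) (dX : measure_display) (Xs : measurableType dX)
  (H : lmodType R) (ip : H -> H -> R) (phi : Xs -> H)
  (X : Om -> Xs) (y a : H) (lam : R) :
  is_RKHS ip phi ->
  (forall h : H, measurable_fun setT (fun x => ip (phi x) h)) ->
  measurable_fun setT (fun x => ip (phi x) (phi x)) ->
  measurable_fun setT X ->
  (\int[P]_w (ip (phi (X w)) (phi (X w)))%:E < +oo)%E ->
  y != 0 -> a != 0 ->
  let Y := fun w => ip (phi (X w)) y in
  let A := fun w => ip (phi (X w)) a in
  (0 < 'V_P[Y])%E -> (0 < 'V_P[A])%E ->
  0 <= lam ->
  let vY := fine 'V_P[Y] in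
  let vA := fine 'V_P[A] in
  let rhoYA := fine (covariance P Y A) / Num.sqrt (vY * vA) in
  forall (dZ dS : measure_display) (Zs : measurableType dZ)
    (Ss : measurableType dS) (S : Om -> Ss) (g : Xs * Ss -> Zs),
  measurable_fun setT S -> measurable_fun setT g ->
  indep_rv P (fun w => (X w, A w, Y w)) S ->
  let Z := fun w => g (X w, S w) in
  forall EA EY : Om -> R,
  is_cond_exp P Z A EA -> is_cond_exp P Z Y EY ->
  ((2^-1 * (lam * vA - vY
      - Num.sqrt (vY ^+ 2 + lam ^+ 2 * vA ^+ 2
                  - 2 * lam * vA * vY * (2 * rhoYA ^+ 2 - 1))))%:E
   <= lam%:E * 'V_P[EA] - 'V_P[EY])%E.
Proof.
move=> RKHS mphi_h mphi mX phi_fin _ _ Y A VY_gt0 VA_gt0 lam_ge0 vY vA rhoYA.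
move=> dZ dS Zs Ss S g mS mg _ Z EA EY AEA YEY.
have ipP : inner_product ip by case: RKHS.
have mZ : measurable_fun setT Z.
  exact: measurableT_comp mg (measurable_fun_pair mX mS).
have A_L2 := ip_feature_Lfun2 ipP (mphi_h a) mphi mX phi_fin.
have Y_L2 := ip_feature_Lfun2 ipP (mphi_h y) mphi mX phi_fin.
have EA_L2 := cond_exp_Lfun2 mZ AEA A_L2.
have EY_L2 := cond_exp_Lfun2 mZ YEY Y_L2.
have psdK := psd2_covariance EA_L2 EY_L2.
have psdL := psd2_covariance_sub EA_L2 EY_L2 A_L2 Y_L2
  (fun t s => variance_cond_exp_lincomb_le mZ t s A_L2 Y_L2 AEA YEY).
have vA_gt0 : 0 < vA by rewrite -lte_fin fineK ?variance_fin_num.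
have vY_gt0 : 0 < vY by rewrite -lte_fin fineK ?variance_fin_num.
rewrite /rhoYA covarianceC corr_discriminantE //.
rewrite -[ 'V_P[EA]]fineK ?variance_fin_num //.
rewrite -[ 'V_P[EY]]fineK ?variance_fin_num //.
by rewrite -EFinM -EFinB lee_fin; exact: psd2_sandwich_lower_bound psdK psdL.
Qed.
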